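(* Let $V$ be the vector module of $gl(m|n)$ and $V(\Lambda)$ a finite-dimensional irreducible $gl(m|n)$-module with maximal $\mathbb{Z}$-graded component $V_0(\Lambda)$. Then $V\otimes V(\Lambda)$ is cyclically generated as an $L$-module by the $L_0$-submodule $V\otimes V_0(\Lambda)$, and $V\otimes V(\Lambda)=U(L_-)\,\big(V\otimes V_0(\Lambda)\big)$.
   Context: $L=gl(m|n)$ over $\mathbb{C}$, with homogeneous basis $E_{pq}$ ($1\le p,q\le m+n$), parity $(p)+(q)$ where $(p)=0$ for $p\le m$, $(p)=1$ otherwise, and graded bracket $[E_{pq},E_{rs}]=\delta_{qr}E_{ps}-(-1)^{((p)+(q))((r)+(s))}\delta_{ps}E_{rq}$. $L$ has the $\mathbb{Z}$-grading $L=L_-\oplus L_0\oplus L_+$ with $L_0=gl(m)\oplus gl(n)$ the even part, $L_+=\mathrm{span}\{E_{pq}:p\le m<q\}$, $L_-=\mathrm{span}\{E_{qp}:p\le m<q\}$. The vector module $V$ has basis $|s\rangle$ with $E_{pq}|s\rangle=\delta_{qs}|p\rangle$, and $L$ acts on tensor products via the coproduct $\Delta(x)=x\otimes1+1\otimes x$ with the usual sign rule. The maximal $\mathbb{Z}$-graded component $V_0(\Lambda)$ of $V(\Lambda)$ is the irreducible $L_0$-submodule generated by the highest weight vector (it is annihilated by $L_+$). *)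

From HB Require Import structures.
From mathcomp Require Import all_boot all_order all_algebra.

Set Implicit Arguments. Unset Strict Implicit. Unset Printing Implicit Defensive.
Import Order.TTheory GRing.Theory Num.Theory.
Local Open Scope ring_scope.

Definition par (m n : nat) (p : 'I_(m + n)) : bool := (m <= p)%N.

Definition epar (m n : nat) (p q : 'I_(m + n)) : bool := par p (+) par q.

Definition sgn (F : pzRingType) (b : bool) : F := if b then -1 else 1.

Definition inL0 (m n : nat) (p q : 'I_(m + n)) : bool := par p == par q.
Definition inLplus (m n : nat) (p q : 'I_(m + n)) : bool := ~~ par p && par q.
Definition inLminus (m n : nat) (p q : 'I_(m + n)) : bool := par p && ~~ par q.

(* ---------- finite-dimensional gl(m|n)-supermodules ----------
   A d-dimensional module is given by a homogeneous basis e_0..e_(d-1) of parities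
   pw : 'I_d -> bool, and the matrices rho p q : 'M_d of the action of E_pq
   on column vectors ('cV_d). *)
Definition is_glrep (F : fieldType) (m n d : nat) (pw : 'I_d -> bool)
    (rho : 'I_(m + n) -> 'I_(m + n) -> 'M[F]_d) : Prop :=
  (forall p q i j, pw i (+) pw j != epar p q -> rho p q i j = 0) /\
  (forall p q r s,
     rho p q *m rho r s - sgn F (epar p q && epar r s) *: (rho r s *m rho p q) =
     (q == r)%:R *: rho p s
       - (sgn F (epar p q && epar r s) * (p == s)%:R) *: rho r q).

Definition evenpart (F : fieldType) (d : nat) (pw : 'I_d -> bool) (v : 'cV[F]_d)
  : 'cV[F]_d := \col_i (if pw i then 0 else v i 0).

Definition graded_subspace (F : fieldType) (d : nat) (pw : 'I_d -> bool)
    (U : {vspace 'cV[F]_d}) : Prop :=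
  forall v, v \in U -> evenpart pw v \in U.

Definition stable_subspace (F : fieldType) (m n d : nat)
    (rho : 'I_(m + n) -> 'I_(m + n) -> 'M[F]_d) (U : {vspace 'cV[F]_d}) : Prop :=
  forall p q v, v \in U -> rho p q *m v \in U.

Definition irreducible_glrep (F : fieldType) (m n d : nat) (pw : 'I_d -> bool)
    (rho : 'I_(m + n) -> 'I_(m + n) -> 'M[F]_d) : Prop :=
  (0 < d)%N /\
  forall U : {vspace 'cV[F]_d}, graded_subspace pw U -> stable_subspace rho U ->
    U = 0%VS \/ U = fullv.

Definition highest_weight_vector (F : fieldType) (m n d : nat)
    (rho : 'I_(m + n) -> 'I_(m + n) -> 'M[F]_d) (v : 'cV[F]_d) : Prop :=
  v != 0 /\
  (forall p, exists c : F, rho p p *m v = c *: v) /\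
  (forall p q : 'I_(m + n), (p < q)%N -> rho p q *m v = 0).

(* V_0(Lambda): the L_0-submodule generated by the highest weight vector v,
   i.e. the smallest subspace containing v and stable under all E_pq in L_0. *)
Definition inV0 (F : fieldType) (m n d : nat)
    (rho : 'I_(m + n) -> 'I_(m + n) -> 'M[F]_d) (v w : 'cV[F]_d) : Prop :=
  forall U : {vspace 'cV[F]_d}, v \in U ->
    (forall p q u, inL0 p q -> u \in U -> rho p q *m u \in U) -> w \in U.

(* ---------- the tensor product V (x) W ----------
   An element sum_(s,j) X s j |s> (x) e_j of V (x) W is encoded by the matrix
   X : 'M_(m+n, d).  The coproduct with the sign rule gives
     E_pq (|s> (x) w) = (E_pq|s>) (x) w + (-1)^(((p)+(q))(s)) |s> (x) rho(E_pq) w,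
   with E_pq|s> = delta_qs |p>, i.e. X |-> delta_mx p q *m X + D *m X *m (rho p q)^T
   where D is the diagonal sign matrix. *)
Definition tens_act (F : fieldType) (m n d : nat)
    (rho : 'I_(m + n) -> 'I_(m + n) -> 'M[F]_d) (p q : 'I_(m + n))
    (X : 'M[F]_(m + n, d)) : 'M[F]_(m + n, d) :=
  delta_mx p q *m X
  + diag_mx (\row_s sgn F (epar p q && par s)) *m X *m (rho p q)^T.

Definition in_V_tens_V0 (F : fieldType) (m n d : nat)
    (rho : 'I_(m + n) -> 'I_(m + n) -> 'M[F]_d) (v : 'cV[F]_d)
    (X : 'M[F]_(m + n, d)) : Prop :=
  forall s : 'I_(m + n), inV0 rho v (row s X)^T.

(* the subspace U(A)S of V (x) W, A given by a predicate on basis indices,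
   is the smallest subspace containing S and stable under the E_pq in A;
   "U(A)S is everything" says: every such subspace is the whole space. *)
Definition generates (F : fieldType) (m n d : nat)
    (rho : 'I_(m + n) -> 'I_(m + n) -> 'M[F]_d)
    (A : 'I_(m + n) -> 'I_(m + n) -> bool) (S : 'M[F]_(m + n, d) -> Prop) : Prop :=
  forall U : {vspace 'M[F]_(m + n, d)},
    (forall X, S X -> X \in U) ->
    (forall p q X, A p q -> X \in U -> tens_act rho p q X \in U) ->
    U = fullv.

(* Let V0 be the L_0-module generated by the highest weight vector v. As
   [L_+, L_0] lies in L_+ and L_+ kills v, L_+ kills V0; as moreover
   [L_+, L_-] lies in L_0, M = U(L_-) V0 is a submodule. It contains
   U(n_-) v, which is everything: a homogeneous component u of v is again a
   highest weight vector, U(n_-) u is a graded submodule, hence everything by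
   irreducibility, and comparing eigenvalues of H = sum_r r E_rr (which the
   lowering operators strictly increase) shows that v is a multiple of u.
   Finally, if W = U(A) W0 for a set A of the E_pq, then V (x) W is
   U(A) (V (x) W0): E (|s> (x) w) differs from +-|s> (x) E w by a pure tensor
   |p> (x) w, so the w such that all |s> (x) w lie in a given A-stable
   subspace form an A-stable subspace containing W0. *)

From HB Require Import structures.
From mathcomp Require Import all_boot all_order all_algebra.
From mathcomp Require Import reals complex.
From mathcomp Require Import ring.
From Stdlib Require Import Classical.
Set Implicit Arguments. Unset Strict Implicit. Unset Printing Implicit Defensive.
Import Order.TTheory GRing.Theory Num.Theory.
Local Open Scope ring_scope.

Lemma memv_bigcapP (F : fieldType) (vT : vectType F) (I : finType) (P : pred I)
    (Us : I -> {vspace vT}) w :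
  reflect (forall i, P i -> w \in Us i) (w \in \bigcap_(i | P i) Us i)%VS.
Proof.
rewrite memvE; apply: (iffP subv_bigcapP) => h i Pi; first by rewrite memvE h.
by rewrite -memvE h.
Qed.

Section Closure.
Variables (F : fieldType) (d : nat) (I : finType) (ops : I -> I -> 'M[F]_d).

Definition stable_under (Q : I -> I -> bool) (C : {vspace 'cV[F]_d}) :=
  forall p q w, Q p q -> w \in C -> ops p q *m w \in C.

Definition is_closure Q (S C : {vspace 'cV[F]_d}) :=
  [/\ (S <= C)%VS, stable_under Q C
    & forall D, (S <= D)%VS -> stable_under Q D -> (C <= D)%VS].

Lemma stable_under_cap Q C D :
  stable_under Q C -> stable_under Q D -> stable_under Q (C :&: D)%VS.
Proof.
move=> sC sD p q w Qpq /memv_capP[wC wD].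
by apply/memv_capP; split; [apply: sC | apply: sD].
Qed.

(* Descend along the dimension: a stable superspace of S not above C cuts C
   down to a smaller one. *)
Lemma ex_closure Q S : exists C, is_closure Q S C.
Proof.
suff: forall k C, (\dim C < k)%N -> (S <= C)%VS -> stable_under Q C ->
    exists C, is_closure Q S C.
  move/(_ _ fullv (ltnSn _) (subvf S)); by apply=> p q w _ _; exact: memvf.
elim=> [//|k IHk] C dimC SC sC.
have [[D [SD sD CD]] | noD] :=
  classic (exists D, [/\ (S <= D)%VS, stable_under Q D & ~~ (C <= D)%VS]).
  apply: (IHk (C :&: D)%VS); last exact: stable_under_cap.
    have [leCDC eqCD] := dimv_leqif_eq (capvSl C D).
    rewrite -ltnS (leq_trans _ dimC) // ltnS ltn_neqAle leCDC andbT eqCD.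
    by apply: contra CD => /eqP <-; rewrite capvSr.
  by rewrite subv_cap SC SD.
exists C; split=> // D SD sD; apply/negPn/negP => CD; apply: noD; by exists D.
Qed.

Lemma closure_ind Q S C (J : finType) (P : pred J) (A : J -> 'M[F]_d)
    (T : {vspace 'cV[F]_d}) :
  is_closure Q S C ->
  (forall j w, P j -> w \in S -> A j *m w \in T) ->
  (forall j p q w, P j -> Q p q -> w \in C ->
     (forall j', P j' -> A j' *m w \in T) -> A j *m (ops p q *m w) \in T) ->
  forall j w, P j -> w \in C -> A j *m w \in T.
Proof.
move=> [SC sC minC] AS Astep.
pose D := (C :&: \bigcap_(j | P j) (linfun (mulmx (A j)) @^-1: T))%VS.
have memD w : w \in D = (w \in C) && [forall (j | P j), A j *m w \in T].
  rewrite memv_cap; congr (_ && _); apply/memv_bigcapP/forall_inP => h j /h;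
  by rewrite -memv_preim lfunE.
have CD : (C <= D)%VS.
  apply: minC.
    apply/subvP => w Sw; rewrite memD (subvP SC) //=.
    by apply/forall_inP => j Pj; apply: AS.
  move=> p q w Qpq; rewrite !memD => /andP[Cw /forall_inP Aw].
  by rewrite sC //=; apply/forall_inP => j Pj; apply: Astep.
by move=> j w Pj /(subvP CD); rewrite memD => /andP[_ /forall_inP]; apply.
Qed.

Lemma closure_ind_ops Q S C (R : I -> I -> bool) (T : {vspace 'cV[F]_d}) :
  is_closure Q S C ->
  (forall a b w, R a b -> w \in S -> ops a b *m w \in T) ->
  (forall a b p q w, R a b -> Q p q -> w \in C ->
     (forall a' b', R a' b' -> ops a' b' *m w \in T) ->
     ops a b *m (ops p q *m w) \in T) ->
  forall a b w, R a b -> w \in C -> ops a b *m w \in T.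
Proof.
move=> clC base step a b w ab wC.
apply: (closure_ind (P := fun j : I * I => R j.1 j.2) (A := fun j => ops j.1 j.2)
  (j := (a, b)) clC _ _ ab wC) => [[a' b'] | [a' b'] p q x Rab Qpq xC IH].
  exact: base.
by apply: step => // a'' b'' /(IH (a'', b'')).
Qed.

End Closure.

Section ZDegree.
Variables (m n : nat).
Implicit Types x y z : 'I_(m + n).

Lemma inLplus_inL0 x y z : inLplus x y -> inL0 y z -> inLplus x z.
Proof. by rewrite /inLplus /inL0; case: (par x); case: (par y); case: (par z). Qed.

Lemma inL0_inLplus x y z : inL0 x y -> inLplus y z -> inLplus x z.
Proof. by rewrite /inLplus /inL0; case: (par x); case: (par y); case: (par z). Qed.

Lemma inL0_inLminus x y z : inL0 x y -> inLminus y z -> inLminus x z.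
Proof. by rewrite /inLminus /inL0; case: (par x); case: (par y); case: (par z). Qed.

Lemma inLminus_inL0 x y z : inLminus x y -> inL0 y z -> inLminus x z.
Proof. by rewrite /inLminus /inL0; case: (par x); case: (par y); case: (par z). Qed.

Lemma inLplus_inLminus x y z : inLplus x y -> inLminus y z -> inL0 x z.
Proof.
by rewrite /inLplus /inLminus /inL0; case: (par x); case: (par y); case: (par z).
Qed.

Lemma inLminus_inLplus x y z : inLminus x y -> inLplus y z -> inL0 x z.
Proof.
by rewrite /inLplus /inLminus /inL0; case: (par x); case: (par y); case: (par z).
Qed.

Lemma inL0_inLplus_inLminus x y : [|| inL0 x y, inLplus x y | inLminus x y].
Proof. by rewrite /inLplus /inLminus /inL0; case: (par x); case: (par y). Qed.

Lemma inLplus_ltn x y : inLplus x y -> (x < y)%N.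
Proof. by rewrite /inLplus /par -ltnNge => /andP[/leq_trans]; apply. Qed.

End ZDegree.

Section VectorEigenspaces.
Variables (F : fieldType) (d : nat).
Implicit Types (A B : 'M[F]_d) (W : {vspace 'cV[F]_d}).

Definition veigenspace A (mu : F) : {vspace 'cV[F]_d} :=
  lker (linfun (mulmx (A - mu%:M))).

Lemma mem_veigenspace A mu w : (w \in veigenspace A mu) = (A *m w == mu *: w).
Proof. by rewrite memv_ker lfunE /= mulmxBl mul_scalar_mx subr_eq0. Qed.

Lemma sumv_seq_sup (I : eqType) (t : seq I) (P : pred I)
    (Vs : I -> {vspace 'cV[F]_d}) r :
  r \in t -> P r -> (Vs r <= \sum_(i <- t | P i) Vs i)%VS.
Proof. by move=> tr Pr; rewrite (big_rem r) //= Pr addvSl. Qed.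

Lemma mulmx_sumv_sub (I : eqType) (t : seq I) (P : pred I)
    (Vs : I -> {vspace 'cV[F]_d}) B W :
  (forall r w, r \in t -> P r -> w \in Vs r -> B *m w \in W) ->
  forall w, w \in (\sum_(r <- t | P r) Vs r)%VS -> B *m w \in W.
Proof.
move=> BV; suff: (\sum_(r <- t | P r) Vs r <= linfun (mulmx B) @^-1: W)%VS.
  by move=> /subvP sub w /sub; rewrite -memv_preim lfunE.
rewrite big_seq_cond; elim/big_ind: _ => [|U1 U2|r /andP[tr Pr]].
- exact: sub0v.
- by move=> *; rewrite subv_add; apply/andP.
- by apply/subvP => w /(BV r w tr Pr); rewrite -memv_preim lfunE.
Qed.

Lemma sumv_veigenspace_mulmx A (t : seq F) (P : pred F) w :
  w \in (\sum_(r <- t | P r) veigenspace A r)%VS ->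
  A *m w \in (\sum_(r <- t | P r) veigenspace A r)%VS.
Proof.
apply: mulmx_sumv_sub => r x tr Pr xr; move: (xr); rewrite mem_veigenspace.
by move/eqP->; apply/memvZ/(subvP (sumv_seq_sup (veigenspace A) tr Pr)).
Qed.

Lemma sumv_veigenspace_cap_eq0 A (t : seq F) (P : pred F) c w :
  ~~ P c -> w \in (\sum_(r <- t | P r) veigenspace A r)%VS ->
  w \in veigenspace A c -> w = 0.
Proof.
move=> Pc; elim: t w => [|a t IHt] w; first by rewrite big_nil memv0 => /eqP.
rewrite big_cons; case: ifP => [Pa|_]; last exact: IHt.
case/memv_addP => x xa [z zt ->] wc.
have ca : c != a by apply: contraNneq Pc => ->.
have : (c - a) *: (x + z) = 0.
  apply: IHt; last exact: memvZ.
  suff ->: (c - a) *: (x + z) = A *m z - a *: z.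
    by apply: memvB; [apply: sumv_veigenspace_mulmx | apply: memvZ].
  move: xa wc; rewrite !mem_veigenspace mulmxDr => /eqP Ax /eqP.
  by rewrite Ax scalerBl => <-; rewrite scalerDr opprD addrACA subrr add0r.
by move/eqP; rewrite scaler_eq0 subr_eq0 (negbTE ca) => /eqP.
Qed.

End VectorEigenspaces.

Section Eigenvalues.
Variables (F : closedFieldType) (d : nat).

Definition eigenvalues (A : 'M[F]_d) : seq F :=
  sval (closed_field_poly_normal (char_poly A^T)).

Lemma veigenspace_eigenvalues A mu w :
  w \in veigenspace A mu -> w != 0 -> mu \in eigenvalues A.
Proof.
move=> wmu w0; have: eigenvalue A^T mu.
  apply/eigenvalueP; exists w^T; last by rewrite trmx_eq0.
  by rewrite -trmx_mul; move: wmu; rewrite mem_veigenspace => /eqP->; rewrite linearZ.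
rewrite eigenvalue_root_char /eigenvalues; case: closed_field_poly_normal => r /= ->.
by rewrite (monicP (char_poly_monic _)) scale1r root_prod_XsubC.
Qed.

End Eigenvalues.

Lemma sgn_addb (R : pzRingType) a b : sgn R a * sgn R b = sgn R (a (+) b).
Proof. by case: a b => [] []; rewrite /sgn /= ?mulrNN ?mul1r ?mulr1. Qed.

Lemma sgn_sqr (R : pzRingType) a : sgn R a * sgn R a = 1.
Proof. by rewrite sgn_addb addbb. Qed.

Section HighestWeight.
Variables (F : numClosedFieldType) (m n d : nat) (pw : 'I_d -> bool)
  (rho : 'I_(m + n) -> 'I_(m + n) -> 'M[F]_d).
Hypothesis rho_rep : is_glrep pw rho.

Local Notation Idx := 'I_(m + n).

Lemma rho_comm p q r s :
  rho p q *m rho r s = sgn F (epar p q && epar r s) *: (rho r s *m rho p q)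
    + (q == r)%:R *: rho p s - (sgn F (epar p q && epar r s) * (p == s)%:R) *: rho r q.
Proof. by case: rho_rep => _ bracket; rewrite -addrA -bracket addrC subrK. Qed.

Lemma rho_comm_mem (C : {vspace 'cV[F]_d}) p q r s w :
  rho r s *m (rho p q *m w) \in C ->
  (q = r -> rho p s *m w \in C) -> (p = s -> rho r q *m w \in C) ->
  rho p q *m (rho r s *m w) \in C.
Proof.
move=> Crs Cps Crq; rewrite mulmxA rho_comm mulmxBl mulmxDl -!scalemxAl -!mulmxA.
apply: memvB; first apply: memvD; first exact: memvZ.
  by case: (q =P r) => [/Cps/memvZ//|_]; rewrite scale0r mem0v.
by case: (p =P s) => [/Crq/memvZ//|_]; rewrite mulr0 scale0r mem0v.
Qed.

Definition parity_mx : 'M[F]_d := diag_mx (\row_i sgn F (pw i)).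

Lemma parity_mx_rho p q :
  parity_mx *m rho p q = sgn F (epar p q) *: (rho p q *m parity_mx).
Proof.
apply/matrixP=> i j; rewrite mul_diag_mx mul_mx_diag !mxE.
case: rho_rep => homog _.
have [/homog->|/negbNE/eqP<-] := boolP (pw i (+) pw j != epar p q).
  by rewrite mulr0 mul0r mulr0.
by rewrite -sgn_addb mulrACA sgn_sqr mulr1.
Qed.

Lemma rho_parity_mx p q (w : 'cV[F]_d) :
  rho p q *m (parity_mx *m w) = sgn F (epar p q) *: (parity_mx *m (rho p q *m w)).
Proof. by rewrite !mulmxA parity_mx_rho -scalemxAl scalerA sgn_sqr scale1r. Qed.

Lemma parity_mxK : parity_mx *m parity_mx = 1%:M.
Proof.
apply/matrixP=> i j; rewrite mul_diag_mx !mxE.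
by case: eqP => [->|_]; rewrite ?sgn_sqr ?mulr0.
Qed.

Lemma evenpartE (w : 'cV[F]_d) : evenpart pw w = 2^-1 *: (w + parity_mx *m w).
Proof.
apply/matrixP=> i j; rewrite mul_diag_mx !mxE (ord1 j) /sgn.
case: (pw i); first by rewrite mulN1r subrr mulr0.
by rewrite mul1r; field.
Qed.

Definition weight_mx : 'M[F]_d := \sum_(r : Idx) (r : nat)%:R *: rho r r.

Lemma weight_mx_rho p q : weight_mx *m rho p q =
  rho p q *m weight_mx + ((p : nat)%:R - (q : nat)%:R) *: rho p q.
Proof.
have sum_delta (x : Idx) : \sum_(r : Idx) (r : nat)%:R * (r == x)%:R = (x : nat)%:R :> F.
  rewrite (bigD1 x) //= eqxx mulr1 big1 ?addr0 // => r /negbTE->.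
  by rewrite mulr0.
have diag_comm r : rho r r *m rho p q =
    rho p q *m rho r r + ((r == p)%:R - (r == q)%:R) *: rho p q.
  rewrite rho_comm /epar addbb /sgn scale1r mul1r -addrA scalerBl.
  by congr (_ + (_ - _)); [case: (r =P p) => [->|] | case: (r =P q) => [->|]];
    rewrite ?scale0r.
rewrite /weight_mx mulmx_suml mulmx_sumr -(sum_delta p) -(sum_delta q).
rewrite -sumrB scaler_suml -big_split /=; apply: eq_bigr => r _.
by rewrite -scalemxAl diag_comm scalerDr scalemxAr scalerA -mulrBr.
Qed.

Lemma weight_vector_veigenspace (c : Idx -> F) w :
  (forall r, rho r r *m w = c r *: w) ->
  w \in veigenspace weight_mx (\sum_(r : Idx) (r : nat)%:R * c r).
Proof.
move=> wc; rewrite mem_veigenspace /weight_mx mulmx_suml scaler_suml.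
by apply/eqP/eq_bigr => r _; rewrite -scalemxAl wc scalerA.
Qed.

Lemma rho_veigenspace mu p q w : w \in veigenspace weight_mx mu ->
  rho p q *m w \in veigenspace weight_mx (mu + ((p : nat)%:R - (q : nat)%:R)).
Proof.
rewrite !mem_veigenspace mulmxA weight_mx_rho mulmxDl -mulmxA => /eqP->.
by apply/eqP; rewrite -scalemxAr -scalemxAl -scalerDl.
Qed.

Definition lowering (p q : Idx) : bool := (q < p)%N.

Lemma lowering_closure_stable u N :
  highest_weight_vector rho u -> is_closure rho lowering <[u]>%VS N ->
  stable_subspace rho N.
Proof.
move=> [_ [u_weight u_raise]] clN; have [uN N_low _] := clN.
have cartan r w : w \in N -> rho r r *m w \in N.
  apply: (closure_ind_ops (R := fun a b => a == b) clN _ _ (eqxx r)) => {r w}.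
    move=> r _ _ /eqP<- /vlineP[k ->]; have [c uc] := u_weight r.
    by rewrite -scalemxAr uc scalerA; apply/memvZ/(subvP uN)/memv_line.
  move=> r _ p q x /eqP<- pq xN IH.
  apply: rho_comm_mem => [|->|->]; [exact: N_low pq (IH r r (eqxx r)) | exact: N_low pq xN ..].
have any_op w : w \in N -> (forall a b : Idx, (a < b)%N -> rho a b *m w \in N) ->
    forall a b, rho a b *m w \in N.
  move=> wN raise a b; case: (ltngtP a b) => [ab|ba|/val_inj->].
  - exact: raise.
  - exact: N_low.
  - exact: cartan.
move=> a b w wN; apply: (any_op) => // {}a {}b ab.
apply: (closure_ind_ops (R := fun a b : Idx => (a < b)%N) clN _ _ ab wN) => {a b ab w wN}.
  by move=> a b x ab /vlineP[k ->]; rewrite -scalemxAr u_raise // scaler0 mem0v.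
move=> a b p q x ab pq xN /(any_op x xN) IH.
by apply: rho_comm_mem => [|_|_]; [exact: N_low pq (IH a b) | exact: IH ..].
Qed.

Lemma homogeneous_closure_full u e N :
  irreducible_glrep pw rho -> highest_weight_vector rho u ->
  parity_mx *m u = e *: u -> is_closure rho lowering <[u]>%VS N -> N = fullv.
Proof.
move=> [_ irr] hw_u u_par clN; have [uN N_low _] := clN.
have N_graded : graded_subspace pw N.
  move=> w wN; rewrite evenpartE; apply/memvZ/memvD => //.
  apply: (closure_ind (P := xpredT) (A := fun _ : unit => parity_mx) (j := tt)
    clN _ _ isT wN).
    move=> _ x _ /vlineP[k ->]; rewrite -scalemxAr u_par scalerA.
    exact/memvZ/(subvP uN)/memv_line.
  move=> _ p q x _ pq xN IH; rewrite mulmxA parity_mx_rho -scalemxAl -mulmxA.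
  exact/memvZ/N_low/IH.
have [N0|//] := irr N N_graded (lowering_closure_stable hw_u clN).
by case: hw_u => u0 _; move: (subvP uN u (memv_line u)); rewrite N0 memv0 (negbTE u0).
Qed.

Lemma veigenspace_line_of_closure_full c u v N :
  u \in veigenspace weight_mx c -> v \in veigenspace weight_mx c ->
  is_closure rho lowering <[u]>%VS N -> N = fullv -> v \in <[u]>%VS.
Proof.
move=> uc vc [_ _ minN] Nfull.
pose Z := (\sum_(r <- eigenvalues weight_mx | c < r) veigenspace weight_mx r)%VS.
have lowZ mu p q w : lowering p q -> c <= mu ->
    w \in veigenspace weight_mx mu -> rho p q *m w \in Z.
  move=> pq cmu /(rho_veigenspace p q) wnu.
  have [->|w0] := eqVneq (rho p q *m w) 0; first exact: mem0v.
  apply: (subvP (sumv_seq_sup (veigenspace weight_mx) (veigenspace_eigenvalues wnu w0) _)) wnu.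
  by rewrite (le_lt_trans cmu) // ltrDl subr_gt0 ltr_nat.
have Z_low p q w : lowering p q -> w \in Z -> rho p q *m w \in Z.
  by move=> pq; apply: mulmx_sumv_sub => r x _ /ltW cr; apply: lowZ.
have NZ : (N <= <[u]> + Z)%VS.
  apply: minN => [|p q w pq]; first exact: addvSl.
  move=> /memv_addP[_ /vlineP[k ->] [z zZ ->]].
  rewrite mulmxDr -scalemxAr -[X in X \in _]add0r.
  apply: memv_add; first exact: mem0v.
  by apply: memvD; [apply/memvZ/(lowZ c) | apply: Z_low].
have vN : v \in N by rewrite Nfull memvf.
have /memv_addP[_ /vlineP[k ->] [z zZ vkz]] := subvP NZ v vN.
suff z0 : z = 0 by rewrite vkz z0 addr0 memvZ ?memv_line.
apply: (sumv_veigenspace_cap_eq0 (c := c) _ zZ); first by rewrite ltxx.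
have ->: z = v - k *: u by rewrite vkz addrC addKr.
by rewrite memvB ?memvZ.
Qed.

Lemma highest_weight_closure_full v N :
  irreducible_glrep pw rho -> highest_weight_vector rho v ->
  is_closure rho lowering <[v]>%VS N -> N = fullv.
Proof.
move=> irr hw_v clN; have [v0 [v_weight v_raise]] := hw_v.
have [c vc] := fin_all_exists v_weight.
(* [v] may be inhomogeneous; [v + e P v] is a homogeneous highest weight vector. *)
have [e [ee u0]] : exists e : F, e * e = 1 /\ v + e *: (parity_mx *m v) != 0.
  have [/eqP|] := eqVneq (v + parity_mx *m v) 0; last by exists 1; rewrite mulr1 scale1r.
  rewrite addrC addr_eq0 => /eqP Pv; exists (-1); split; first by rewrite mulrNN mulr1.
  by rewrite scaleN1r Pv opprK -mulr2n -scaler_nat scaler_eq0 pnatr_eq0.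
pose u := v + e *: (parity_mx *m v).
have uc r : rho r r *m u = c r *: u.
  rewrite mulmxDr -scalemxAr rho_parity_mx /epar addbb scale1r vc.
  by rewrite -scalemxAr scalerDr !scalerA mulrC.
have hw_u : highest_weight_vector rho u.
  split=> //; split=> [r|p q pq]; first by exists (c r).
  by rewrite mulmxDr -scalemxAr rho_parity_mx v_raise // mulmx0 !scaler0 addr0.
have u_par : parity_mx *m u = e *: u.
  rewrite mulmxDr -scalemxAr mulmxA parity_mxK mul1mx scalerDr scalerA ee scale1r.
  by rewrite addrC.
have [Nu clNu] := ex_closure rho lowering <[u]>%VS.
have Nu_full := homogeneous_closure_full irr hw_u u_par clNu.
have /vlineP[k vku] := veigenspace_line_of_closure_full
  (weight_vector_veigenspace uc) (weight_vector_veigenspace vc) clNu Nu_full.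
have k0 : k != 0 by apply: contraNneq v0 => k0; rewrite vku k0 scale0r.
case: clN clNu => vN N_low _ [_ _ minNu]; apply/eqP; rewrite eqEsubv subvf -Nu_full.
apply: minNu N_low; apply/subvP => _ /vlineP[x ->]; apply/memvZ/(subvP vN).
have ->: u = k^-1 *: v by rewrite vku scalerA mulVf // scale1r.
exact/memvZ/memv_line.
Qed.

Lemma L0_closure_raising_eq0 v V0 :
  highest_weight_vector rho v -> is_closure rho (@inL0 m n) <[v]>%VS V0 ->
  forall a b w, inLplus a b -> w \in V0 -> rho a b *m w = 0.
Proof.
move=> [_ [_ v_raise]] clV0 a b w ab wV0; apply/eqP; rewrite -memv0.
apply: (closure_ind_ops (R := @inLplus m n) clV0 _ _ ab wV0) => {a b ab w wV0}.
  move=> a b _ /inLplus_ltn ab /vlineP[k ->].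
  by rewrite -scalemxAr v_raise // scaler0 mem0v.
move=> a b r s x ab rs xV0 IH; apply: rho_comm_mem.
- by move: (IH a b ab); rewrite memv0 => /eqP->; rewrite mulmx0 mem0v.
- by move=> br; rewrite -br in rs; exact: IH a s (inLplus_inL0 ab rs).
- by move=> sa; rewrite sa in ab; exact: IH r b (inL0_inLplus rs ab).
Qed.

Lemma Lminus_closure_stable V0 M :
  stable_under rho (@inL0 m n) V0 ->
  (forall a b w, inLplus a b -> w \in V0 -> rho a b *m w = 0) ->
  is_closure rho (@inLminus m n) V0 M -> stable_subspace rho M.
Proof.
move=> V0_L0 V0_plus clM; have [V0M M_minus _] := clM.
have M_L0 p q w : inL0 p q -> w \in M -> rho p q *m w \in M.
  apply: (closure_ind_ops clM) => {p q w}.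
    by move=> p q x pq xV0; apply/(subvP V0M)/V0_L0.
  move=> p q r s x pq rs xM IH; apply: rho_comm_mem.
  - exact: M_minus rs (IH p q pq).
  - by move=> qr; rewrite -qr in rs; exact: M_minus (inL0_inLminus pq rs) xM.
  - by move=> ps; rewrite ps in pq; exact: M_minus (inLminus_inL0 rs pq) xM.
have M_plus p q w : inLplus p q -> w \in M -> rho p q *m w \in M.
  apply: (closure_ind_ops clM) => {p q w}.
    by move=> p q x pq xV0; rewrite V0_plus // mem0v.
  move=> p q r s x pq rs xM IH; apply: rho_comm_mem.
  - exact: M_minus rs (IH p q pq).
  - by move=> qr; rewrite -qr in rs; exact: M_L0 (inLplus_inLminus pq rs) xM.
  - by move=> ps; rewrite ps in pq; exact: M_L0 (inLminus_inLplus rs pq) xM.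
move=> p q w wM; case/or3P: (inL0_inLplus_inLminus p q) => pq.
- exact: M_L0.
- exact: M_plus.
- exact: M_minus.
Qed.

Lemma Lminus_closure_full v V0 M :
  irreducible_glrep pw rho -> highest_weight_vector rho v ->
  is_closure rho (@inL0 m n) <[v]>%VS V0 -> is_closure rho (@inLminus m n) V0 M ->
  M = fullv.
Proof.
move=> irr hw_v clV0 clM; have [vV0 V0_L0 _] := clV0; have [V0M _ _] := clM.
have M_stable :=
  Lminus_closure_stable V0_L0 (L0_closure_raising_eq0 hw_v clV0) clM.
have [N clN] := ex_closure rho lowering <[v]>%VS; have [_ _ minN] := clN.
apply/eqP; rewrite eqEsubv subvf -(highest_weight_closure_full irr hw_v clN).
by apply: minN => [|p q w _]; [exact: subv_trans vV0 V0M | exact: M_stable].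
Qed.

End HighestWeight.

Section TensorWithVectorModule.
Variables (F : fieldType) (m n d : nat) (rho : 'I_(m + n) -> 'I_(m + n) -> 'M[F]_d).
Local Notation Idx := 'I_(m + n).

(* [etensor s w] encodes the pure tensor |s> (x) w. *)
Definition etensor (s : Idx) (w : 'cV[F]_d) : 'M[F]_(m + n, d) :=
  delta_mx s (0 : 'I_1) *m w^T.

Definition etensor_lfun (s : Idx) : 'Hom('cV[F]_d, 'M[F]_(m + n, d)) :=
  (linfun (mulmx (delta_mx s (0 : 'I_1) : 'M[F]_(m + n, 1))) \o linfun trmx)%VF.

Lemma etensor_lfunE s w : etensor_lfun s w = etensor s w.
Proof. by rewrite comp_lfunE !lfunE. Qed.

Lemma row_etensor s' s w : (row s' (etensor s w))^T = (s' == s)%:R *: w.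
Proof. by apply/matrixP=> i j; rewrite !mxE big_ord1 !mxE eqxx andbT (ord1 j). Qed.

Lemma etensor_sum (X : 'M[F]_(m + n, d)) : X = \sum_(s : Idx) etensor s (row s X)^T.
Proof.
apply/matrixP=> i j; rewrite summxE (bigD1 i) //= big1 ?addr0.
  by rewrite !mxE big_ord1 !mxE !eqxx mul1r.
by move=> s /negbTE si; rewrite !mxE big_ord1 !mxE eq_sym si mul0r.
Qed.

Lemma tens_act_etensor p q s w : tens_act rho p q (etensor s w) =
  (q == s)%:R *: etensor p w + sgn F (epar p q && par s) *: etensor s (rho p q *m w).
Proof.
rewrite /tens_act /etensor !mulmxA mul_delta_mx_cond; congr (_ + _).
  by case: (q == s); rewrite ?scale1r ?mul0mx ?scale0r.
rewrite -mulmxA -trmx_mul scalemxAl; congr (_ *m _).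
apply/matrixP=> i j; rewrite mul_diag_mx !mxE.
by case: (i =P s) => [->|_]; rewrite ?mulr0 ?andbF.
Qed.

Lemma closure_etensor_generates Q W0 (S : 'M[F]_(m + n, d) -> Prop) :
  is_closure rho Q W0 fullv -> (forall s w, w \in W0 -> S (etensor s w)) ->
  generates rho Q S.
Proof.
move=> [_ _ minW] S_W0 U SU U_Q.
pose K := (\bigcap_(s | true) (etensor_lfun s @^-1: U))%VS.
have memK w : reflect (forall s, etensor s w \in U) (w \in K).
  apply: (iffP (memv_bigcapP _ _ _)) => wK s.
    by rewrite -etensor_lfunE memv_preim; apply: wK.
  by rewrite -memv_preim etensor_lfunE wK.
have fullK : (fullv <= K)%VS.
  apply: minW => [|p q w pq /memK wK].
    by apply/subvP => w /S_W0 SW; apply/memK => s; apply: SU.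
  apply/memK => s; have ->: etensor s (rho p q *m w) = sgn F (epar p q && par s) *:
      (tens_act rho p q (etensor s w) - (q == s)%:R *: etensor p w).
    by rewrite tens_act_etensor addrC addKr scalerA sgn_sqr scale1r.
  by rewrite memvZ // memvB ?memvZ // U_Q.
apply/vspaceP => X; rewrite memvf (etensor_sum X) memv_suml // => s _.
by move/memK: (subvP fullK _ (memvf (row s X)^T)).
Qed.

End TensorWithVectorModule.

Local Open Scope complex_scope.

Theorem lemma7 (R : realType) (m n d : nat) (pw : 'I_d -> bool)
    (rho : 'I_(m + n) -> 'I_(m + n) -> 'M[R[i]]_d) (v : 'cV[R[i]]_d) :
  is_glrep pw rho -> irreducible_glrep pw rho -> highest_weight_vector rho v ->
  generates rho (fun _ _ => true) (in_V_tens_V0 rho v) /\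
  generates rho (@inLminus m n) (in_V_tens_V0 rho v).
Proof.
move=> rep irr hw_v.
have [V0 clV0] := ex_closure rho (@inL0 m n) <[v]>%VS.
have [M clM] := ex_closure rho (@inLminus m n) V0.
have M_full := Lminus_closure_full rep irr hw_v clV0 clM.
have gen_minus : generates rho (@inLminus m n) (in_V_tens_V0 rho v).
  apply: (closure_etensor_generates (W0 := V0)); first by rewrite -M_full.
  move=> s w wV0 s' U vU U_L0; rewrite row_etensor; apply: memvZ.
  by case: clV0 => _ _ minV0; apply: (subvP (minV0 U _ U_L0)) wV0; rewrite -memvE.
by split=> // U SU U_all; apply: gen_minus SU _ => p q X _; apply: U_all.
Qed.
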